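(* Let $G$ be a connected graph and $r\in\mathbb{N}$. For every covering $p:C\to G$ that preserves $(r/2)$-balls there is a covering $q:G_r\to C$ such that $p_r=p\circ q$, and all such coverings $q$ are equivalent.
   Context: Graphs may have loops and parallel edges and are viewed as 1-complexes; coverings have connected covering spaces. A cycle may be a loop or a pair of parallel edges; a closed walk once around a cycle $O$ traverses every edge of $O$ exactly once. $\pi_1^r(G,x_0)$ is the subgroup of $\pi_1(G,x_0)$ generated by the classes of closed walks $W_0QW_0^-$, $W_0$ a walk from $x_0$ to a vertex $y$, $Q$ a closed walk at $y$ once around a cycle of length at most $r$, $W_0^-$ the reverse of $W_0$. The $r$-local covering $p_r:G_r\to G$ is the connected normal covering with characteristic subgroup $\pi_1^r(G,x_0)$. For a vertex $v$ of a graph $X$, $B_X(v,r/2)$ is the subgraph formed by the vertices at distance at most $r/2$ from $v$ and the edges $xy$ with $d_X(v,x)+1+d_X(y,v)\le r$. A covering $p:C\to G$ preserves $(r/2)$-balls if for every vertex $v$ of $G$ and every lift $\hat v$, $p$ maps $B_C(\hat v,r/2)$ isomorphically onto $B_G(v,r/2)$. Two coverings $q:X\to Y$, $q':X'\to Y$ are equivalent if there is a homeomorphism $h:X\to X'$ with $q'\circ h=q$. *)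

From Stdlib Require Import List Arith Relations.
Import ListNotations.
Set Implicit Arguments.

(* A graph: vertices, darts (oriented edges), tail map and a fixed-point-free
   involution reversing darts.  An edge is a pair {d, rv d}; a loop is an edge
   whose two darts have equal tails. *)
Record graph := Graph {
  V : Type;
  D : Type;
  tl : D -> V;
  rv : D -> D;
  rv_inv : forall d, rv (rv d) = d;
  rv_neq : forall d, rv d <> d }.

Definition hd (G : graph) (d : D G) : V G := tl G (rv G d).

Fixpoint is_walk (G : graph) (x : V G) (w : list (D G)) : Prop :=
  match w with
  | [] => True
  | d :: w' => tl G d = x /\ is_walk G (hd G d) w'
  end.

Fixpoint wend (G : graph) (x : V G) (w : list (D G)) : V G :=
  match w with
  | [] => x
  | d :: w' => wend G (hd G d) w'
  end.

Definition connected (G : graph) : Prop :=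
  inhabited (V G) /\
  forall x y : V G, exists w, is_walk G x w /\ wend G x w = y.

Record gmap (G H : graph) := GMap { mV : V G -> V H; mD : D G -> D H }.

Definition is_morphism (G H : graph) (f : gmap G H) : Prop :=
  (forall d, tl H (mD f d) = mV f (tl G d)) /\
  (forall d, mD f (rv G d) = rv H (mD f d)).

Definition is_covering (G H : graph) (f : gmap G H) : Prop :=
  connected G /\ @is_morphism G H f /\
  (forall y : V H, exists x, mV f x = y) /\
  (forall (x : V G) (e : D H), tl H e = mV f x ->
     exists! d : D G, tl G d = x /\ mD f d = e).

(* Q is a closed walk at x going once around a cycle:
   nonempty, closed, with pairwise distinct vertices and pairwise distinct
   edges.  (length 1 = loop, length 2 = pair of parallel edges) *)
Definition cycle_walk (G : graph) (x : V G) (Q : list (D G)) : Prop :=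
  is_walk G x Q /\ wend G x Q = x /\ 1 <= length Q /\
  NoDup (map (tl G) Q) /\
  (forall i j d e, i <> j -> nth_error Q i = Some d -> nth_error Q j = Some e ->
     e <> d /\ e <> rv G d).

Inductive rstep (G : graph) (r : nat) (x0 : V G) : list (D G) -> list (D G) -> Prop :=
| rstep_back : forall a b d, tl G d = wend G x0 a ->
    rstep G r x0 (a ++ b) (a ++ d :: rv G d :: b)
| rstep_cyc : forall a b Q, cycle_walk G (wend G x0 a) Q -> length Q <= r ->
    rstep G r x0 (a ++ b) (a ++ Q ++ b).

Definition requiv (G : graph) (r : nat) (x0 : V G) : relation (list (D G)) :=
  clos_refl_sym_trans _ (rstep G r x0).

Definition in_pi1r (G : graph) (r : nat) (x0 : V G) (W : list (D G)) : Prop :=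
  @requiv G r x0 W [].

(* pr : X -> G, with base point xh0 over x0, is a covering with
   characteristic subgroup pi_1^r(G, x0): a closed walk W at x0 lifts to a
   closed walk at xh0 iff [W] lies in pi_1^r(G, x0).  This characterizes the
   r-local covering p_r : G_r -> G up to equivalence. *)
Definition is_r_local_covering (G : graph) (r : nat) (x0 : V G)
    (X : graph) (pr : gmap X G) (xh0 : V X) : Prop :=
  @is_covering X G pr /\ mV pr xh0 = x0 /\
  forall W, is_walk G x0 W -> wend G x0 W = x0 ->
    ((exists W', is_walk X xh0 W' /\ map (mD pr) W' = W /\ wend X xh0 W' = xh0)
     <-> @in_pi1r G r x0 W).

Definition within (G : graph) (v x : V G) (n : nat) : Prop :=
  exists w, is_walk G v w /\ wend G v w = x /\ length w <= n.

Arguments within {G} v x n.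

(* vertices and darts of B_G(v, r/2) *)
Definition ballV (G : graph) (v : V G) (r : nat) (x : V G) : Prop :=
  exists n, within v x n /\ 2 * n <= r.
Definition ballD (G : graph) (v : V G) (r : nat) (d : D G) : Prop :=
  exists a b, within v (tl G d) a /\ within v (hd G d) b /\ a + 1 + b <= r.

Arguments ballV {G} v r x.
Arguments ballD {G} v r d.

Definition preserves_balls (C G : graph) (p : gmap C G) (r : nat) : Prop :=
  forall vh : V C,
    (forall x, ballV vh r x -> ballV (mV p vh) r (mV p x)) /\
    (forall y, ballV (mV p vh) r y -> exists x, ballV vh r x /\ mV p x = y) /\
    (forall x x', ballV vh r x -> ballV vh r x' -> mV p x = mV p x' -> x = x') /\
    (forall d, ballD vh r d -> ballD (mV p vh) r (mD p d)) /\
    (forall e, ballD (mV p vh) r e -> exists d, ballD vh r d /\ mD p d = e) /\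
    (forall d d', ballD vh r d -> ballD vh r d' -> mD p d = mD p d' -> d = d').

Arguments preserves_balls {C G} p r.

Definition factors (X C G : graph) (f : gmap X G) (g : gmap C G) (h : gmap X C) : Prop :=
  (forall x, mV f x = mV g (mV h x)) /\ (forall d, mD f d = mD g (mD h d)).

Arguments factors {X C G} f g h.

Definition bij (A B : Type) (f : A -> B) : Prop :=
  (forall a a', f a = f a' -> a = a') /\ (forall b, exists a, f a = b).

Definition equivalent_cov (X C : graph) (q q' : gmap X C) : Prop :=
  exists h : gmap X X, @is_morphism X X h /\ bij (mV h) /\ bij (mD h) /\
    (forall x, mV q' (mV h x) = mV q x) /\ (forall d, mD q' (mD h d) = mD q d).

Arguments equivalent_cov {X C} q q'.
Arguments is_r_local_covering {G} r x0 {X} pr xh0.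
Arguments is_covering {G H} f.
Arguments is_morphism {G H} f.

(* A covering p that preserves (r/2)-balls lifts every closed walk of length
   at most r to a closed walk: cut the walk into two halves; the lifts of both
   halves end in the ball around the starting point, on which p is injective.
   Hence the endpoint of a lift along p is invariant under the moves that
   generate pi_1^r(G, x0), so pi_1^r(G, x0) is contained in the characteristic
   subgroup of p and the lifting criterion produces q.  Since pi_1^r(G, x0) is
   generated by a conjugation-invariant set, it is normal, so the deck group of
   p_r acts transitively on fibres; by uniqueness of lifts, any two
   factorizations q, q' then differ by a deck transformation. *)

From Stdlib Require Import List Arith Relations Lia ClassicalEpsilon.
Import ListNotations.

Lemma list_split_at {A : Type} (l : list A) k :
  k <= length l -> exists u w, l = u ++ w /\ length u = k.
Proof.
  intros Hk. exists (firstn k l), (skipn k l).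
  split; [symmetry; apply firstn_skipn | now apply firstn_length_le].
Qed.

Definition revw (G : graph) (w : list (D G)) : list (D G) := rev (map (rv G) w).

Section Walks.
Context {G : graph}.

Lemma hd_rv d : hd G (rv G d) = tl G d.
Proof. unfold hd. now rewrite rv_inv. Qed.

Lemma is_walk_app x u w :
  is_walk G x (u ++ w) <-> is_walk G x u /\ is_walk G (wend G x u) w.
Proof.
  revert x; induction u as [|d u IH]; intros x; simpl; [tauto|].
  rewrite IH. tauto.
Qed.

Lemma wend_app x u w : wend G x (u ++ w) = wend G (wend G x u) w.
Proof. revert x; induction u; intros; simpl; auto. Qed.

Lemma revw_cons d w : revw G (d :: w) = revw G w ++ [rv G d].
Proof. reflexivity. Qed.

Lemma revw_involutive w : revw G (revw G w) = w.
Proof.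
  unfold revw. rewrite map_rev, rev_involutive, map_map.
  induction w as [|d w IH]; simpl; auto. now rewrite rv_inv, IH.
Qed.

Lemma length_revw w : length (revw G w) = length w.
Proof. unfold revw. now rewrite length_rev, length_map. Qed.

Lemma wend_revw x w : is_walk G x w -> wend G (wend G x w) (revw G w) = x.
Proof.
  revert x; induction w as [|d w IH]; intros x Hw; simpl in *; auto.
  destruct Hw as [Hd Hw]. rewrite revw_cons, wend_app, IH by auto.
  simpl. now rewrite hd_rv.
Qed.

Lemma is_walk_revw x w : is_walk G x w -> is_walk G (wend G x w) (revw G w).
Proof.
  revert x; induction w as [|d w IH]; intros x Hw; simpl in *; auto.
  destruct Hw as [Hd Hw]. rewrite revw_cons, is_walk_app, wend_revw by auto.
  simpl. auto.
Qed.

Lemma within_hd (c : V G) d n : within c (tl G d) n -> within c (hd G d) (S n).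
Proof.
  intros [w [Hw [Hwe Hwl]]]. exists (w ++ [d]).
  rewrite is_walk_app, wend_app, length_app, Hwe. simpl. repeat split; auto. lia.
Qed.

Lemma ballD_tl (c : V G) r d : ballD c r d -> ballV c r (tl G d).
Proof.
  intros [a [b [Ha [Hb Hr]]]]. destruct (le_lt_dec a (S b)).
  - exists a. split; auto. lia.
  - exists (S b). split; [|lia]. rewrite <- hd_rv. now apply within_hd.
Qed.

Lemma ballD_rv (c : V G) r d : ballD c r d -> ballD c r (rv G d).
Proof.
  intros [a [b [Ha [Hb Hr]]]]. exists b, a.
  unfold hd. rewrite rv_inv. repeat split; auto. lia.
Qed.

Lemma ballD_hd (c : V G) r d : ballD c r d -> ballV c r (hd G d).
Proof. intros Hd. now apply ballD_tl, ballD_rv. Qed.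

End Walks.

Section Morphisms.
Context {G H : graph} (f : gmap G H).
Hypothesis Hm : is_morphism f.

Lemma morphism_hd d : mV f (hd G d) = hd H (mD f d).
Proof. destruct Hm as [Htl Hrv]. unfold hd. now rewrite <- Hrv, Htl. Qed.

Lemma is_walk_map x w : is_walk G x w -> is_walk H (mV f x) (map (mD f) w).
Proof.
  revert x; induction w as [|d w IH]; intros x Hw; simpl in *; auto.
  destruct Hw as [Hd Hw]. rewrite <- morphism_hd. split; auto.
  rewrite (proj1 Hm). now f_equal.
Qed.

Lemma wend_map x w : wend H (mV f x) (map (mD f) w) = mV f (wend G x w).
Proof.
  revert x; induction w as [|d w IH]; intros x; simpl; auto.
  now rewrite <- morphism_hd.
Qed.

Lemma map_revw w : map (mD f) (revw G w) = revw H (map (mD f) w).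
Proof.
  unfold revw. rewrite map_rev, !map_map. f_equal.
  apply map_ext. apply (proj2 Hm).
Qed.

End Morphisms.

Definition gmap_comp {X Y Z : graph} (g : gmap Y Z) (f : gmap X Y) : gmap X Z :=
  GMap X Z (fun x => mV g (mV f x)) (fun d => mD g (mD f d)).

Definition gmap_id (X : graph) : gmap X X := GMap X X (fun x => x) (fun d => d).

Lemma is_morphism_comp {X Y Z : graph} (g : gmap Y Z) (f : gmap X Y) :
  is_morphism g -> is_morphism f -> is_morphism (gmap_comp g f).
Proof.
  intros [Hg1 Hg2] [Hf1 Hf2]. split; intros d; simpl.
  - now rewrite Hg1, Hf1.
  - now rewrite Hf2, Hg2.
Qed.

Lemma is_morphism_id (X : graph) : is_morphism (gmap_id X).
Proof. split; reflexivity. Qed.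

Lemma bij_of_inverse (A B : Type) (f : A -> B) (g : B -> A) :
  (forall a, g (f a) = a) -> (forall b, f (g b) = b) -> bij f.
Proof.
  intros Hgf Hfg. split.
  - intros a a' E. now rewrite <- (Hgf a), <- (Hgf a'), E.
  - intros b. now exists (g b).
Qed.

Section Lifting.
Context {Y G : graph} (f : gmap Y G).

(* The junk value [c] is returned when [e] has no lift at [c]. *)
Definition lift_step (c : V Y) (e : D G) : V Y :=
  epsilon (inhabits c) (fun v => exists d, tl Y d = c /\ mD f d = e /\ hd Y d = v).

Fixpoint lift_end (c : V Y) (W : list (D G)) : V Y :=
  match W with
  | [] => c
  | e :: W' => lift_end (lift_step c e) W'
  end.

Lemma lift_end_app c u w : lift_end c (u ++ w) = lift_end (lift_end c u) w.
Proof. revert c; induction u; intros; simpl; auto. Qed.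

Hypothesis Hf : is_covering f.

Let Hm : is_morphism f := proj1 (proj2 Hf).

Lemma dart_lift_exists c e : tl G e = mV f c -> exists d, tl Y d = c /\ mD f d = e.
Proof.
  intros He. destruct (proj2 (proj2 (proj2 Hf)) c e He) as [d [Hd _]]. eauto.
Qed.

Lemma dart_lift_unique d1 d2 : tl Y d1 = tl Y d2 -> mD f d1 = mD f d2 -> d1 = d2.
Proof.
  intros Ht Hd. destruct (proj2 (proj2 (proj2 Hf)) (tl Y d1) (mD f d1) (proj1 Hm d1))
    as [d0 [_ Hd0]].
  rewrite <- (Hd0 d1), <- (Hd0 d2); auto.
Qed.

Lemma hd_lift_step d : hd Y d = lift_step (tl Y d) (mD f d).
Proof.
  unfold lift_step.
  destruct (epsilon_spec (inhabits (tl Y d))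
    (fun v => exists d', tl Y d' = tl Y d /\ mD f d' = mD f d /\ hd Y d' = v))
    as [d' [Ht [Hd <-]]]; eauto.
  f_equal. symmetry. now apply dart_lift_unique.
Qed.

Lemma lift_end_map c w : is_walk Y c w -> lift_end c (map (mD f) w) = wend Y c w.
Proof.
  revert c; induction w as [|d w IH]; intros c Hw; simpl in *; auto.
  destruct Hw as [<- Hw]. rewrite <- hd_lift_step. auto.
Qed.

Lemma walk_lift c W : is_walk G (mV f c) W -> exists w, is_walk Y c w /\ map (mD f) w = W.
Proof.
  revert c; induction W as [|e W IH]; intros c HW; simpl in *.
  - now exists [].
  - destruct HW as [He HW]. destruct (dart_lift_exists c e He) as [d [<- <-]].
    rewrite <- morphism_hd in HW by exact Hm.
    destruct (IH _ HW) as [w [Hw <-]]. now exists (d :: w).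
Qed.

Lemma mV_lift_end c W : is_walk G (mV f c) W -> mV f (lift_end c W) = wend G (mV f c) W.
Proof.
  intros HW. destruct (walk_lift c W HW) as [w [Hw <-]].
  now rewrite lift_end_map, wend_map.
Qed.

Lemma lift_end_revw c W : is_walk G (mV f c) W -> lift_end (lift_end c W) (revw G W) = c.
Proof.
  intros HW. destruct (walk_lift c W HW) as [w [Hw <-]].
  rewrite <- map_revw by exact Hm.
  rewrite (lift_end_map c w), lift_end_map by (auto using is_walk_revw).
  now apply wend_revw.
Qed.

Lemma lift_end_retrace c W :
  is_walk G (mV f c) (revw G W) -> lift_end (lift_end c (revw G W)) W = c.
Proof.
  intros HW. rewrite <- (revw_involutive W) at 2. now apply lift_end_revw.
Qed.

Lemma within_lift_end c W : is_walk G (mV f c) W -> within c (lift_end c W) (length W).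
Proof.
  intros HW. destruct (walk_lift c W HW) as [w [Hw <-]].
  exists w. rewrite lift_end_map, length_map; auto.
Qed.

Lemma closed_lift_iff c W : is_walk G (mV f c) W ->
  (exists w, is_walk Y c w /\ map (mD f) w = W /\ wend Y c w = c) <-> lift_end c W = c.
Proof.
  intros HW. split.
  - intros [w [Hw [<- Hwe]]]. now rewrite lift_end_map.
  - intros He. destruct (walk_lift c W HW) as [w [Hw <-]].
    exists w. rewrite <- lift_end_map; auto.
Qed.

Lemma lift_end_conj c u W :
  is_walk G (mV f c) u -> is_walk G (wend G (mV f c) u) W ->
  wend G (wend G (mV f c) u) W = wend G (mV f c) u ->
  lift_end c (u ++ W ++ revw G u) = c <-> lift_end (lift_end c u) W = lift_end c u.
Proof.
  intros Hu HW HWe. rewrite !lift_end_app.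
  set (c1 := lift_end c u).
  assert (Hc1 : mV f c1 = wend G (mV f c) u) by now apply mV_lift_end.
  split.
  - intros E.
    assert (Hz : mV f (lift_end c1 W) = wend G (mV f c) u).
    { rewrite mV_lift_end; rewrite Hc1; auto. }
    rewrite <- (lift_end_revw (lift_end c1 W) (revw G u)).
    + now rewrite revw_involutive, E.
    + rewrite Hz. now apply is_walk_revw.
  - intros ->. now apply lift_end_revw.
Qed.

Lemma morphism_lift_unique {X : graph} (g1 g2 : gmap X Y) x :
  connected X -> is_morphism g1 -> is_morphism g2 ->
  (forall d, mD f (mD g1 d) = mD f (mD g2 d)) -> mV g1 x = mV g2 x ->
  (forall x, mV g1 x = mV g2 x) /\ (forall d, mD g1 d = mD g2 d).
Proof.
  intros [_ Hconn] Hm1 Hm2 Hfd Hx.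
  assert (HD : forall d, mV g1 (tl X d) = mV g2 (tl X d) -> mD g1 d = mD g2 d).
  { intros d E. apply dart_lift_unique; auto.
    now rewrite (proj1 Hm1), (proj1 Hm2). }
  assert (HV : forall y, mV g1 y = mV g2 y).
  { intros y. destruct (Hconn x y) as [w [Hw <-]].
    revert x Hx Hw. induction w as [|d w IH]; intros v Hv Hw; simpl in *; auto.
    destruct Hw as [Ht Hw]. apply IH; auto.
    rewrite !morphism_hd by auto. f_equal. apply HD. now rewrite Ht. }
  auto.
Qed.

End Lifting.

Section ShortClosedWalks.
Context {C G : graph} (p : gmap C G) (r : nat).
Hypotheses (Hp : is_covering p) (Hball : preserves_balls p r).

Lemma ballV_lift_end c u :
  is_walk G (mV p c) u -> 2 * length u <= r -> ballV c r (lift_end p c u).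
Proof. intros Hu Hl. exists (length u). split; auto. now apply within_lift_end. Qed.

Lemma lift_end_eq_in_ball c u w :
  is_walk G (mV p c) u -> is_walk G (mV p c) w ->
  wend G (mV p c) u = wend G (mV p c) w ->
  2 * length u <= r -> 2 * length w <= r ->
  lift_end p c u = lift_end p c w.
Proof.
  intros Hu Hw Huw Hlu Hlw. destruct (Hball c) as [_ [_ [Hinj _]]].
  apply Hinj; try now apply ballV_lift_end.
  now rewrite !mV_lift_end.
Qed.

Lemma lift_step_in_ball c u w e :
  is_walk G (mV p c) u -> is_walk G (mV p c) w ->
  tl G e = wend G (mV p c) u -> hd G e = wend G (mV p c) w ->
  length u + 1 + length w <= r -> 2 * length u <= r -> 2 * length w <= r ->
  lift_step p (lift_end p c u) e = lift_end p c w.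
Proof.
  intros Hu Hw Htl Hhd Hl Hlu Hlw.
  destruct (Hball c) as [_ [_ [Hinj [_ [Hsurj _]]]]].
  destruct (Hsurj e) as [d [Hd <-]].
  { exists (length u), (length w). rewrite Htl, Hhd.
    repeat split; auto; [exists u | exists w]; auto. }
  assert (Hm : is_morphism p) by apply Hp.
  assert (Htl_d : tl C d = lift_end p c u).
  { apply Hinj; auto using ballD_tl, ballV_lift_end.
    now rewrite <- (proj1 Hm), Htl, mV_lift_end. }
  rewrite <- Htl_d, <- hd_lift_step by auto.
  apply Hinj; auto using ballD_hd, ballV_lift_end.
  now rewrite morphism_hd, Hhd, mV_lift_end.
Qed.

(* Split [Q] in two halves; both endpoints of the lifted halves lie in the
   ball around [c], where [p] is injective (and, for the middle dart of an
   odd cycle, surjective on darts). *)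
Lemma closed_walk_lift_short c Q :
  is_walk G (mV p c) Q -> wend G (mV p c) Q = mV p c -> length Q <= r ->
  lift_end p c Q = c.
Proof.
  intros HQ HQe HQl.
  destruct (Nat.Even_or_Odd (length Q)) as [[k Hk]|[k Hk]];
    destruct (list_split_at Q k) as [A [B [-> HA]]]; try lia;
    rewrite length_app in Hk, HQl; rewrite is_walk_app in HQ; destruct HQ as [HAw HBw];
    rewrite wend_app in HQe; rewrite lift_end_app.
  - assert (HrB : is_walk G (mV p c) (revw G B)) by (rewrite <- HQe; now apply is_walk_revw).
    rewrite (lift_end_eq_in_ball c A (revw G B)); auto.
    + now apply lift_end_retrace.
    + rewrite <- HQe at 2. now rewrite wend_revw.
    + lia.
    + rewrite length_revw. lia.
  - destruct B as [|e B]; simpl in Hk; [lia|].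
    destruct HBw as [He HBw]. simpl in HQe, HQl |- *.
    assert (HrB : is_walk G (mV p c) (revw G B)) by (rewrite <- HQe; now apply is_walk_revw).
    rewrite (lift_step_in_ball c A (revw G B) e); auto.
    + now apply lift_end_retrace.
    + rewrite <- HQe. now rewrite wend_revw.
    + rewrite length_revw. lia.
    + lia.
    + rewrite length_revw. lia.
Qed.

End ShortClosedWalks.

Section RelativeHomotopy.
Context {G : graph} (r : nat) (x0 : V G).

Lemma rstep_is_walk A B : rstep G r x0 A B -> (is_walk G x0 A <-> is_walk G x0 B).
Proof.
  intros [a b d Hd | a b Q [HQ [HQe _]] _]; rewrite !is_walk_app; simpl.
  - rewrite hd_rv, Hd.
    assert (tl G (rv G d) = hd G d) by reflexivity. tauto.
  - rewrite HQe. tauto.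
Qed.

Lemma requiv_is_walk A B : requiv G r x0 A B -> (is_walk G x0 A <-> is_walk G x0 B).
Proof.
  induction 1 as [A B Hs | | | A B E _ IH1 _ IH2]; auto using rstep_is_walk; tauto.
Qed.

Lemma rstep_ctx u s A B :
  wend G x0 u = x0 -> rstep G r x0 A B -> rstep G r x0 (u ++ A ++ s) (u ++ B ++ s).
Proof.
  intros Hu [a b d Hd | a b Q HQ HQl];
    replace (u ++ (a ++ b) ++ s) with ((u ++ a) ++ b ++ s) by now rewrite <- !app_assoc.
  - replace (u ++ (a ++ d :: rv G d :: b) ++ s) with ((u ++ a) ++ d :: rv G d :: b ++ s)
      by now rewrite <- !app_assoc.
    constructor. now rewrite wend_app, Hu.
  - replace (u ++ (a ++ Q ++ b) ++ s) with ((u ++ a) ++ Q ++ b ++ s)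
      by now rewrite <- !app_assoc.
    constructor; auto. now rewrite wend_app, Hu.
Qed.

Lemma requiv_ctx u s A B :
  wend G x0 u = x0 -> requiv G r x0 A B -> requiv G r x0 (u ++ A ++ s) (u ++ B ++ s).
Proof.
  intros Hu. induction 1.
  - apply rst_step. now apply rstep_ctx.
  - apply rst_refl.
  - now apply rst_sym.
  - eapply rst_trans; eauto.
Qed.

Lemma requiv_cancel u : forall a b,
  is_walk G (wend G x0 a) u -> requiv G r x0 (a ++ u ++ revw G u ++ b) (a ++ b).
Proof.
  induction u as [|e u IH]; intros a b Hw; simpl in Hw.
  - apply rst_refl.
  - destruct Hw as [He Hw].
    replace (a ++ (e :: u) ++ revw G (e :: u) ++ b)
      with ((a ++ [e]) ++ u ++ revw G u ++ (rv G e :: b))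
      by (rewrite revw_cons; simpl; now rewrite <- !app_assoc).
    eapply rst_trans.
    + apply IH. now rewrite wend_app.
    + rewrite <- app_assoc. apply rst_sym, rst_step. now constructor.
Qed.

Lemma in_pi1r_conj u W :
  is_walk G x0 u -> wend G x0 u = x0 -> wend G x0 W = x0 ->
  in_pi1r G r x0 (u ++ W ++ revw G u) <-> in_pi1r G r x0 W.
Proof.
  intros Hu Hue HWe.
  assert (Hru : is_walk G x0 (revw G u)) by (rewrite <- Hue at 1; now apply is_walk_revw).
  assert (Hrue : wend G x0 (revw G u) = x0) by (rewrite <- Hue at 1; now apply wend_revw).
  assert (Hcancel : forall a, wend G x0 a = x0 ->
            requiv G r x0 (a ++ revw G u ++ u) a).
  { intros a Ha. pose proof (requiv_cancel (revw G u) a []) as E.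
    rewrite revw_involutive, !app_nil_r in E. apply E. now rewrite Ha. }
  unfold in_pi1r. split; intros HW.
  (* W ~ u^-1 u W u^-1 u = u^-1 (u W u^-1) u ~ u^-1 u ~ [] *)
  - apply (rst_trans _ _ _ (revw G u ++ u ++ W ++ revw G u ++ u)).
    + apply rst_sym. eapply rst_trans.
      * pose proof (requiv_cancel (revw G u) [] (W ++ revw G u ++ u) Hru) as E.
        rewrite revw_involutive in E. exact E.
      * now apply Hcancel.
    + replace (revw G u ++ u ++ W ++ revw G u ++ u)
        with (revw G u ++ (u ++ W ++ revw G u) ++ u) by now rewrite <- !app_assoc.
      eapply rst_trans; [now apply (requiv_ctx (revw G u) u _ [])|].
      now apply (Hcancel []).
  - eapply rst_trans; [now apply (requiv_ctx u (revw G u) W [])|].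
    pose proof (requiv_cancel u [] [] Hu) as E. rewrite app_nil_r in E. exact E.
Qed.

End RelativeHomotopy.

Lemma requiv_lift_end {C G : graph} (p : gmap C G) r c A B :
  is_covering p -> preserves_balls p r -> requiv G r (mV p c) A B ->
  is_walk G (mV p c) A -> lift_end p c A = lift_end p c B.
Proof.
  intros Hp Hball. induction 1 as [A B Hs | | A B E IH | A B E1 E2 IH1 _ IH2]; intros HA.
  - destruct Hs as [a b d Hd | a b Q HQ HQl];
      rewrite is_walk_app in HA; destruct HA as [Ha _]; rewrite !lift_end_app.
    + change (d :: rv G d :: b) with ([d] ++ revw G [d] ++ b).
      rewrite !lift_end_app, lift_end_revw; auto.
      simpl. rewrite mV_lift_end; auto.
    + destruct HQ as [HQw [HQe _]].
      rewrite (closed_walk_lift_short p r Hp Hball (lift_end p c a) Q);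
        rewrite ?mV_lift_end; auto.
  - reflexivity.
  - symmetry. apply IH. now apply (requiv_is_walk r (mV p c) A B).
  - rewrite IH1, IH2; auto. now apply (requiv_is_walk r (mV p c) A B).
Qed.

Lemma lift_end_closed_iff_in_pi1r {G X : graph} r x0 (pr : gmap X G) xh0 xh1 W :
  is_r_local_covering r x0 pr xh0 -> mV pr xh1 = x0 ->
  is_walk G x0 W -> wend G x0 W = x0 ->
  lift_end pr xh1 W = xh1 <-> in_pi1r G r x0 W.
Proof.
  (* Conjugate [W] by the projection [u] of a walk from [xh0] to [xh1]. *)
  intros [Hpr [Hxh0 Hchar]] Hxh1 HW HWe.
  assert (Hm : is_morphism pr) by apply Hpr.
  destruct (proj2 (proj1 Hpr) xh0 xh1) as [w [Hw Hwe]].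
  set (u := map (mD pr) w).
  assert (Hu : is_walk G x0 u) by (rewrite <- Hxh0; now apply is_walk_map).
  assert (Hue : wend G x0 u = x0) by (unfold u; now rewrite <- Hxh0 at 1; rewrite wend_map, Hwe).
  assert (Hlu : lift_end pr xh0 u = xh1) by (unfold u; now rewrite lift_end_map).
  assert (HZ : is_walk G x0 (u ++ W ++ revw G u)).
  { rewrite !is_walk_app, Hue, HWe. rewrite <- Hue at 3. auto using is_walk_revw. }
  assert (HZe : wend G x0 (u ++ W ++ revw G u) = x0).
  { rewrite !wend_app, Hue, HWe. rewrite <- Hue at 1. now apply wend_revw. }
  rewrite <- (in_pi1r_conj r x0 u W), <- (Hchar _ HZ HZe) by auto.
  rewrite <- Hxh0 in HZ, Hu, Hue, HW, HWe.
  rewrite (closed_lift_iff pr Hpr xh0 _ HZ), lift_end_conj, Hlu; rewrite ?Hue; auto.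
  tauto.
Qed.

Section LiftingCriterion.
Context {X Y G : graph} (pr : gmap X G) (f : gmap Y G) (xh0 : V X) (yh0 : V Y) (x0 : V G).
Hypotheses (Hpr : is_covering pr) (Hf : is_covering f)
  (Hxh0 : mV pr xh0 = x0) (Hyh0 : mV f yh0 = x0).
Hypothesis Hclosed : forall W, is_walk G x0 W -> wend G x0 W = x0 ->
  lift_end pr xh0 W = xh0 -> lift_end f yh0 W = yh0.

Let Hmpr : is_morphism pr := proj1 (proj2 Hpr).
Let Hmf : is_morphism f := proj1 (proj2 Hf).

Definition walk_from_base (x : V X) : list (D X) :=
  proj1_sig (constructive_indefinite_description _ (proj2 (proj1 Hpr) xh0 x)).

Lemma walk_from_base_spec x :
  is_walk X xh0 (walk_from_base x) /\ wend X xh0 (walk_from_base x) = x.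
Proof. unfold walk_from_base. now destruct constructive_indefinite_description. Qed.

Definition lift_vertex (x : V X) : V Y :=
  lift_end f yh0 (map (mD pr) (walk_from_base x)).

Lemma is_walk_map_base U : is_walk X xh0 U -> is_walk G (mV f yh0) (map (mD pr) U).
Proof. intros HU. rewrite Hyh0, <- Hxh0. now apply is_walk_map. Qed.

Lemma lift_end_map_indep U1 U2 :
  is_walk X xh0 U1 -> is_walk X xh0 U2 -> wend X xh0 U1 = wend X xh0 U2 ->
  lift_end f yh0 (map (mD pr) U1) = lift_end f yh0 (map (mD pr) U2).
Proof.
  intros HU1 HU2 E.
  set (Z := U1 ++ revw X U2).
  assert (HZ : is_walk X xh0 Z).
  { unfold Z. rewrite is_walk_app, E. auto using is_walk_revw. }
  assert (HZe : wend X xh0 Z = xh0) by (unfold Z; rewrite wend_app, E; now apply wend_revw).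
  assert (HW := Hclosed (map (mD pr) Z)).
  rewrite <- Hxh0, lift_end_map, wend_map, HZe in HW by auto.
  specialize (HW (is_walk_map pr Hmpr xh0 Z HZ) eq_refl eq_refl).
  unfold Z in HW. rewrite map_app, lift_end_app, map_revw in HW by exact Hmpr.
  rewrite <- HW at 2. symmetry. apply lift_end_retrace; auto.
  rewrite mV_lift_end by auto using is_walk_map_base.
  rewrite Hyh0, <- Hxh0, wend_map, E, <- map_revw by auto.
  apply is_walk_map; auto using is_walk_revw.
Qed.

Lemma lift_vertex_wend U :
  is_walk X xh0 U -> lift_end f yh0 (map (mD pr) U) = lift_vertex (wend X xh0 U).
Proof.
  intros HU. destruct (walk_from_base_spec (wend X xh0 U)) as [Hw Hwe].
  now apply lift_end_map_indep.
Qed.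

Lemma lift_vertex_base : lift_vertex xh0 = yh0.
Proof. symmetry. exact (lift_vertex_wend [] I). Qed.

Lemma f_lift_vertex x : mV f (lift_vertex x) = mV pr x.
Proof.
  destruct (walk_from_base_spec x) as [Hw Hwe]. unfold lift_vertex.
  rewrite mV_lift_end by auto using is_walk_map_base.
  now rewrite Hyh0, <- Hxh0, wend_map, Hwe.
Qed.

Lemma lift_dart_exists d : exists d', tl Y d' = lift_vertex (tl X d) /\ mD f d' = mD pr d.
Proof. apply dart_lift_exists; auto. rewrite f_lift_vertex. apply Hmpr. Qed.

Definition lift_dart (d : D X) : D Y :=
  proj1_sig (constructive_indefinite_description _ (lift_dart_exists d)).

Lemma lift_dart_spec d :
  tl Y (lift_dart d) = lift_vertex (tl X d) /\ mD f (lift_dart d) = mD pr d.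
Proof. unfold lift_dart. now destruct constructive_indefinite_description. Qed.

Lemma hd_lift_dart d : hd Y (lift_dart d) = lift_vertex (hd X d).
Proof.
  destruct (lift_dart_spec d) as [Htl Hf_d]. destruct (walk_from_base_spec (tl X d)) as [Hw Hwe].
  assert (Hwd : is_walk X xh0 (walk_from_base (tl X d) ++ [d])).
  { rewrite is_walk_app, Hwe. simpl. auto. }
  rewrite (hd_lift_step f Hf), Htl, Hf_d.
  replace (hd X d) with (wend X xh0 (walk_from_base (tl X d) ++ [d]))
    by (now rewrite wend_app, Hwe).
  now rewrite <- lift_vertex_wend, map_app, lift_end_app.
Qed.

Definition lift_map : gmap X Y := GMap X Y lift_vertex lift_dart.

Lemma is_morphism_lift_map : is_morphism lift_map.
Proof.
  split; intros d; simpl; [apply lift_dart_spec|].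
  apply (dart_lift_unique f Hf).
  - rewrite (proj1 (lift_dart_spec (rv X d))). symmetry. apply hd_lift_dart.
  - rewrite (proj2 Hmf), !(proj2 (lift_dart_spec _)). apply Hmpr.
Qed.

Lemma is_covering_lift_map : is_covering lift_map.
Proof.
  split; [apply Hpr | split; [apply is_morphism_lift_map | split]].
  - intros y. destruct (proj2 (proj1 Hf) yh0 y) as [w [Hw <-]].
    assert (HW : is_walk G (mV pr xh0) (map (mD f) w)).
    { rewrite Hxh0, <- Hyh0. now apply is_walk_map. }
    destruct (walk_lift pr Hpr xh0 _ HW) as [U [HU HUw]].
    exists (wend X xh0 U). simpl.
    now rewrite <- lift_vertex_wend, HUw, lift_end_map.
  - intros x e He. simpl in He.
    assert (He' : tl G (mD f e) = mV pr x) by now rewrite (proj1 Hmf), He, f_lift_vertex.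
    destruct (dart_lift_exists pr Hpr x _ He') as [d [Hd Hde]].
    exists d. simpl. split.
    + split; auto. apply (dart_lift_unique f Hf).
      * now rewrite He, <- Hd, (proj1 (lift_dart_spec d)).
      * now rewrite <- Hde, (proj2 (lift_dart_spec d)).
    + intros d' [Hd' Hd'e]. apply (dart_lift_unique pr Hpr); [congruence|].
      now rewrite Hde, <- Hd'e, (proj2 (lift_dart_spec d')).
Qed.

Lemma lifting_criterion :
  exists q : gmap X Y, is_covering q /\ factors pr f q /\ mV q xh0 = yh0.
Proof.
  exists lift_map. split; [apply is_covering_lift_map | split; [split|]]; simpl.
  - intros x. symmetry. apply f_lift_vertex.
  - intros d. symmetry. apply lift_dart_spec.
  - apply lift_vertex_base.
Qed.

End LiftingCriterion.

Lemma r_local_covering_deck {G X : graph} r x0 (pr : gmap X G) xh0 xh1 :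
  is_r_local_covering r x0 pr xh0 -> mV pr xh1 = x0 ->
  exists h : gmap X X, is_morphism h /\ bij (mV h) /\ bij (mD h) /\
    factors pr pr h /\ mV h xh0 = xh1.
Proof.
  intros Hloc Hxh1. pose proof Hloc as [Hpr [Hxh0 _]].
  assert (Hnormal : forall xa xb, mV pr xa = x0 -> mV pr xb = x0 ->
    forall W, is_walk G x0 W -> wend G x0 W = x0 ->
    lift_end pr xa W = xa -> lift_end pr xb W = xb).
  { intros xa xb Ha Hb W HW HWe. rewrite !(lift_end_closed_iff_in_pi1r r x0 pr xh0); auto. }
  destruct (lifting_criterion pr pr xh0 xh1 x0 Hpr Hpr Hxh0 Hxh1 (Hnormal _ _ Hxh0 Hxh1))
    as [h [Hh [[Fhv Fh] Hh0]]].
  destruct (lifting_criterion pr pr xh1 xh0 x0 Hpr Hpr Hxh1 Hxh0 (Hnormal _ _ Hxh1 Hxh0))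
    as [h' [Hh' [[_ Fh'] Hh'0]]].
  assert (Hmh : is_morphism h) by apply Hh.
  assert (Hmh' : is_morphism h') by apply Hh'.
  assert (Hconn : connected X) by apply Hpr.
  destruct (morphism_lift_unique pr Hpr (gmap_comp h' h) (gmap_id X) xh0)
    as [I1 I2]; auto using is_morphism_comp, is_morphism_id.
  { intros d. simpl. now rewrite <- Fh', <- Fh. }
  { simpl. now rewrite Hh0, Hh'0. }
  destruct (morphism_lift_unique pr Hpr (gmap_comp h h') (gmap_id X) xh1)
    as [J1 J2]; auto using is_morphism_comp, is_morphism_id.
  { intros d. simpl. now rewrite <- Fh, <- Fh'. }
  { simpl. now rewrite Hh'0, Hh0. }
  simpl in I1, I2, J1, J2.
  exists h. split; [exact Hmh|]. split; [|split; [|split; [split|]]]; auto.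
  - now apply (bij_of_inverse _ _ _ (mV h')).
  - now apply (bij_of_inverse _ _ _ (mD h')).
Qed.

Lemma r_local_covering_factors {G X C : graph} r x0 (pr : gmap X G) xh0 (p : gmap C G) :
  is_r_local_covering r x0 pr xh0 -> is_covering p -> preserves_balls p r ->
  exists q : gmap X C, is_covering q /\ factors pr p q.
Proof.
  intros Hloc Hp Hball. pose proof Hloc as [Hpr [Hxh0 _]].
  destruct (proj1 (proj2 (proj2 Hp)) x0) as [c0 Hc0].
  assert (Hclosed : forall W, is_walk G x0 W -> wend G x0 W = x0 ->
            lift_end pr xh0 W = xh0 -> lift_end p c0 W = c0).
  { intros W HW HWe HWl.
    rewrite (requiv_lift_end p r c0 W []); rewrite ?Hc0; auto.
    now apply (lift_end_closed_iff_in_pi1r r x0 pr xh0 xh0). }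
  destruct (lifting_criterion pr p xh0 c0 x0 Hpr Hp Hxh0 Hc0 Hclosed) as [q [Hq [Fq _]]].
  eauto.
Qed.

Theorem lemma4p4 (G : graph) (r : nat) (x0 : V G) (hG : connected G)
    (X : graph) (pr : gmap X G) (xh0 : V X)
    (hpr : is_r_local_covering r x0 pr xh0)
    (C : graph) (p : gmap C G) (hp : is_covering p)
    (hball : preserves_balls p r) :
  (exists q : gmap X C, is_covering q /\ factors pr p q) /\
  (forall q q' : gmap X C, is_covering q -> is_covering q' ->
     factors pr p q -> factors pr p q' -> equivalent_cov q q').
Proof.
  split; [exact (r_local_covering_factors r x0 pr xh0 p hpr hp hball)|].
  intros q q' Hq Hq' [Fq1 Fq2] [Fq1' Fq2'].
  destruct (proj1 (proj2 (proj2 Hq')) (mV q xh0)) as [xh1 Hxh1].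
  assert (Hxh1' : mV pr xh1 = x0) by now rewrite Fq1', Hxh1, <- Fq1, (proj1 (proj2 hpr)).
  destruct (r_local_covering_deck r x0 pr xh0 xh1 hpr Hxh1')
    as [h [Hmh [Hbv [Hbd [[_ Fh] Hh0]]]]].
  destruct (morphism_lift_unique p hp (gmap_comp q' h) q xh0) as [E1 E2].
  { apply Hq. }
  { apply is_morphism_comp; [apply Hq' | exact Hmh]. }
  { apply Hq. }
  { intros d. simpl. now rewrite <- Fq2', <- Fh, <- Fq2. }
  { simpl. now rewrite Hh0. }
  exists h. split; [|split; [|split; [|split]]]; auto.
Qed.
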